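(* Let $P$ be a convex polygon with no two edges parallel. Let $Q=A_0A_1A_2A_3$ be an LMAP in $P$ with $A_0,A_1,A_2,A_3$ in clockwise order, and suppose $A_3$ lies in edge $e_i$ and $A_1$ lies in edge $e_j$, where $e_i\prec e_j$. Then $A_0$ lies on a vertex of $P$.
   Context: $P$ is a compact convex polygon with edges $e_1,\ldots,e_n$ in clockwise order and vertices $v_1,\ldots,v_n$, $e_i$ being the open segment (excluding endpoints) from $v_i$ to $v_{i+1}$ (indices mod $n$); ''lies in $e_i$'' means lies in this open segment. $\ell_i$ is the line containing $e_i$, $\mathsf{I}_{i,j}=\ell_i\cap\ell_j$. For distinct edges, $e_i\prec e_j$ means $\mathsf{I}_{i,j}=v_i+t(v_{i+1}-v_i)$ for some $t\ge1$ (equivalently the clockwise turning angle from direction $v_{i+1}-v_i$ to $v_{j+1}-v_j$ is in $(0,\pi)$). A parallelogram lies in $P$ if its corners lie in $P$. A parallelogram $A_0A_1A_2A_3$ lying in $P$ is locally maximal if there is $\delta>0$ such that every parallelogram $B_0B_1B_2B_3$ lying in $P$ with $|A_iB_i|<\delta$ for all $i$ has area at most that of $A_0A_1A_2A_3$; it is slidable if two corners lie in the same open edge of $P$. An LMAP is a locally maximal non-slidable parallelogram lying in $P$. *)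

From Stdlib Require Import Reals Lra Lia Arith.
Open Scope R_scope.

Definition point := (R * R)%type.

Definition padd (p q : point) : point := (fst p + fst q, snd p + snd q).
Definition psub (p q : point) : point := (fst p - fst q, snd p - snd q).
Definition pscale (t : R) (p : point) : point := (t * fst p, t * snd p).

(* cross product (z-component); standard orientation (y axis up) *)
Definition cross (p q : point) : R := fst p * snd q - snd p * fst q.

Definition dist (p q : point) : R :=
  sqrt ((fst p - fst q) ^ 2 + (snd p - snd q) ^ 2).

(* The polygon is given by n vertices v 0, ..., v (n-1) (0-based indexing,
   indices taken mod n); edge i goes from v i to v ((i+1) mod n). *)
Definition nxt (n i : nat) : nat := ((i + 1) mod n)%nat.

Definition edge_dir (n : nat) (v : nat -> point) (i : nat) : point :=
  psub (v (nxt n i)) (v i).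

(* v lists the vertices of a (nondegenerate, compact) convex polygon in
   clockwise order: every other vertex lies strictly to the right of each
   directed edge line v_i -> v_{i+1}. *)
Definition convex_cw_polygon (n : nat) (v : nat -> point) : Prop :=
  (3 <= n)%nat /\
  forall i k, (i < n)%nat -> (k < n)%nat -> k <> i -> k <> nxt n i ->
    cross (edge_dir n v i) (psub (v k) (v i)) < 0.

Definition in_poly (n : nat) (v : nat -> point) (p : point) : Prop :=
  forall i, (i < n)%nat -> cross (edge_dir n v i) (psub p (v i)) <= 0.

Definition no_parallel_edges (n : nat) (v : nat -> point) : Prop :=
  forall i j, (i < n)%nat -> (j < n)%nat -> i <> j ->
    cross (edge_dir n v i) (edge_dir n v j) <> 0.

Definition in_open_edge (n : nat) (v : nat -> point) (i : nat) (p : point) : Prop :=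
  exists t, 0 < t < 1 /\ p = padd (v i) (pscale t (edge_dir n v i)).

Definition on_line (n : nat) (v : nat -> point) (j : nat) (p : point) : Prop :=
  cross (edge_dir n v j) (psub p (v j)) = 0.

(* e_i ≺ e_j : distinct edges and I_{i,j} = v_i + t (v_{i+1} - v_i) with t >= 1 *)
Definition prec (n : nat) (v : nat -> point) (i j : nat) : Prop :=
  i <> j /\
  exists t, 1 <= t /\ on_line n v j (padd (v i) (pscale t (edge_dir n v i))).

Definition is_parallelogram (A : nat -> point) : Prop :=
  padd (A 0%nat) (A 2%nat) = padd (A 1%nat) (A 3%nat).

Definition para_area (A : nat -> point) : R :=
  Rabs (cross (psub (A 1%nat) (A 0%nat)) (psub (A 3%nat) (A 0%nat))).

Definition para_in_poly (n : nat) (v : nat -> point) (A : nat -> point) : Prop :=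
  is_parallelogram A /\ forall k, (k < 4)%nat -> in_poly n v (A k).

Definition locally_maximal (n : nat) (v : nat -> point) (A : nat -> point) : Prop :=
  para_in_poly n v A /\
  exists delta, 0 < delta /\
    forall B : nat -> point, para_in_poly n v B ->
      (forall k, (k < 4)%nat -> dist (A k) (B k) < delta) ->
      para_area B <= para_area A.

Definition slidable (n : nat) (v : nat -> point) (A : nat -> point) : Prop :=
  exists i k l, (i < n)%nat /\ (k < 4)%nat /\ (l < 4)%nat /\ k <> l /\
    in_open_edge n v i (A k) /\ in_open_edge n v i (A l).

Definition LMAP (n : nat) (v : nat -> point) (A : nat -> point) : Prop :=
  locally_maximal n v A /\ ~ slidable n v A.

Definition para_clockwise (A : nat -> point) : Prop :=
  cross (psub (A 1%nat) (A 0%nat)) (psub (A 2%nat) (A 1%nat)) < 0.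

From Pilot Require Import Defs.
From Stdlib Require Import Reals Lra Lia Psatz Classical.
Open Scope R_scope.

(* Suppose the corner A0 between A1 (in e_j) and A3 (in e_i) is not a vertex.
   Slide A1 by e s d_j, A3 by e t d_i and A0 by the sum, keeping A2 fixed:
   the signed area changes by a term linear in e plus e^2 s t cross(d_i, d_j),
   and e_i < e_j means cross(d_i, d_j) < 0, so when s t > 0 one of the moves
   e, -e enlarges the parallelogram.  If A0 is interior, s = t = 1 works.  If
   A0 lies in an open edge e_k (k <> i, j as Q is not slidable), the choice
   s = cross(d_k, d_i), t = cross(d_j, d_k) makes A0 move along d_k, and the
   position of Q inside P forces s t > 0. *)

Lemma nxt_cases n k : (k < n)%nat ->
  (nxt n k = S k /\ (S k < n)%nat) \/ (nxt n k = 0%nat /\ S k = n).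
Proof.
  intros Hk. unfold nxt. destruct (Nat.eq_dec (k + 1) n) as [E|E].
  - right. rewrite E, Nat.Div0.mod_same. lia.
  - left. rewrite Nat.mod_small by lia. lia.
Qed.

Lemma nxt_lt n k : (k < n)%nat -> (nxt n k < n)%nat.
Proof. intros Hk. destruct (nxt_cases n k Hk) as [[-> ?]|[-> ?]]; lia. Qed.

Lemma nxt_onto n k : (k < n)%nat -> exists m, (m < n)%nat /\ nxt n m = k.
Proof.
  intros Hk. destruct k as [|k].
  - exists (n - 1)%nat. destruct (nxt_cases n (n - 1)) as [[? ?]|[? ?]]; lia.
  - exists k. destruct (nxt_cases n k) as [[? ?]|[? ?]]; lia.
Qed.

Lemma vertex_in_poly n v p : convex_cw_polygon n v -> (p < n)%nat -> in_poly n v (v p).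
Proof.
  intros [_ Hcv] Hp m Hm.
  destruct (Nat.eq_dec p m) as [->|Em].
  - unfold cross, psub; simpl. lra.
  - destruct (Nat.eq_dec p (nxt n m)) as [->|En].
    + unfold cross, edge_dir, psub; simpl. lra.
    + apply Rlt_le, Hcv; auto.
Qed.

Lemma edge_turn_cw n v k : convex_cw_polygon n v -> (k < n)%nat ->
  cross (edge_dir n v k) (edge_dir n v (nxt n k)) < 0.
Proof.
  intros [H3 Hcv] Hk.
  set (m := nxt n k). set (r := nxt n m).
  assert (Hr : (r < n)%nat) by (apply nxt_lt, nxt_lt; exact Hk).
  assert (Hrk : r <> k /\ r <> m).
  { unfold r, m. destruct (nxt_cases n k Hk) as [[-> ?]|[-> ?]].
    - destruct (nxt_cases n (S k)) as [[-> ?]|[-> ?]]; lia.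
    - destruct (nxt_cases n 0) as [[-> ?]|[-> ?]]; lia. }
  pose proof (Hcv k r Hk Hr (proj1 Hrk) (proj2 Hrk)) as Hturn.
  unfold edge_dir, cross, psub in *. fold m r in Hturn |- *. simpl in *. lra.
Qed.

Lemma in_poly_convex n v p q t : in_poly n v p -> in_poly n v q -> 0 <= t <= 1 ->
  in_poly n v (padd p (pscale t (psub q p))).
Proof.
  intros Hp Hq Ht m Hm. specialize (Hp m Hm). specialize (Hq m Hm).
  replace (cross (edge_dir n v m) (psub (padd p (pscale t (psub q p))) (v m))) with
    ((1 - t) * cross (edge_dir n v m) (psub p (v m)) + t * cross (edge_dir n v m) (psub q (v m)))
    by (unfold cross, psub, padd, pscale; simpl; ring).
  nra.
Qed.

Lemma edge_point_in_poly n v k t : convex_cw_polygon n v -> (k < n)%nat -> 0 <= t <= 1 ->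
  in_poly n v (padd (v k) (pscale t (edge_dir n v k))).
Proof.
  intros Hcv Hk Ht.
  apply in_poly_convex; auto; apply vertex_in_poly; auto using nxt_lt.
Qed.

Lemma collinear_pscale (d z : point) : d <> (0, 0) -> cross d z = 0 ->
  exists tau, z = pscale tau d.
Proof.
  destruct d as [dx dy], z as [zx zy]. unfold cross, pscale; simpl. intros Hd Hz.
  destruct (Req_dec dx 0) as [->|Hdx].
  - assert (Hdy : dy <> 0) by (intros ->; apply Hd; reflexivity).
    exists (zy / dy). f_equal; [|field; exact Hdy].
    assert (zx = 0) by (apply (Rmult_eq_reg_l dy); [lra|exact Hdy]). subst. ring.
  - exists (zx / dx). f_equal; [field; exact Hdx|].
    apply (Rmult_eq_reg_l dx); [|exact Hdx]. field_simplify; [lra|exact Hdx].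
Qed.

Lemma on_line_edge_param n v k p : convex_cw_polygon n v -> (k < n)%nat ->
  in_poly n v p -> on_line n v k p ->
  exists tau, 0 <= tau <= 1 /\ p = padd (v k) (pscale tau (edge_dir n v k)).
Proof.
  intros Hcv Hk Hp Hon.
  pose proof (edge_turn_cw n v k Hcv Hk) as Hturn_out.
  destruct (nxt_onto n k Hk) as [m [Hm Em]].
  pose proof (edge_turn_cw n v m Hcv Hm) as Hturn_in. rewrite Em in Hturn_in.
  destruct (collinear_pscale (edge_dir n v k) (psub p (v k))) as [tau Etau]; [|exact Hon|].
  { intros E. rewrite E in Hturn_out. unfold cross in Hturn_out. simpl in Hturn_out. lra. }
  assert (Ep : p = padd (v k) (pscale tau (edge_dir n v k))).
  { rewrite <- Etau. destruct p. unfold padd, psub. simpl. f_equal; ring. }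
  exists tau. split; [|exact Ep].
  pose proof (Hp m Hm) as Hin_m. pose proof (Hp (nxt n k) (nxt_lt n k Hk)) as Hin_k.
  rewrite Ep in Hin_m, Hin_k.
  replace (cross (edge_dir n v m) (psub (padd (v k) (pscale tau (edge_dir n v k))) (v m)))
    with (tau * cross (edge_dir n v m) (edge_dir n v k)) in Hin_m
    by (unfold edge_dir at 1 3; rewrite Em; unfold cross, psub, padd, pscale; simpl; ring).
  replace (cross (edge_dir n v (nxt n k))
             (psub (padd (v k) (pscale tau (edge_dir n v k))) (v (nxt n k))))
    with ((1 - tau) * cross (edge_dir n v k) (edge_dir n v (nxt n k))) in Hin_k
    by (unfold edge_dir at 2 3; unfold cross, psub, padd, pscale; simpl; ring).
  split; nra.
Qed.

Lemma on_line_vertex_or_open_edge n v k p : convex_cw_polygon n v -> (k < n)%nat ->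
  in_poly n v p -> on_line n v k p ->
  (exists m, (m < n)%nat /\ p = v m) \/ in_open_edge n v k p.
Proof.
  intros Hcv Hk Hp Hon.
  destruct (on_line_edge_param n v k p Hcv Hk Hp Hon) as [tau [Htau ->]].
  destruct (Req_dec tau 0) as [->|H0]; [|destruct (Req_dec tau 1) as [->|H1]].
  - left. exists k. split; [exact Hk|]. destruct (v k). unfold padd, pscale. simpl. f_equal; ring.
  - left. exists (nxt n k). split; [apply nxt_lt; exact Hk|].
    unfold padd, pscale, edge_dir, psub. simpl. destruct (v (nxt n k)). simpl. f_equal; ring.
  - right. exists tau. split; [lra|reflexivity].
Qed.

Lemma in_poly_interior_or_on_line n v p : in_poly n v p ->
  (forall m, (m < n)%nat -> cross (edge_dir n v m) (psub p (v m)) < 0) \/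
  exists k, (k < n)%nat /\ on_line n v k p.
Proof.
  intros Hp. destruct (classic (exists k, (k < n)%nat /\ on_line n v k p)) as [Hk|Hno].
  - right. exact Hk.
  - left. intros m Hm. destruct (Rle_lt_or_eq_dec _ _ (Hp m Hm)) as [Hlt|Heq]; [exact Hlt|].
    exfalso. apply Hno. exists m. split; assumption.
Qed.

Lemma in_open_edge_on_line n v k p : in_open_edge n v k p -> on_line n v k p.
Proof.
  intros [t [_ ->]]. unfold on_line, cross, psub, padd, pscale. simpl. ring.
Qed.

Lemma in_poly_cross_le0_of_on_line n v m p q : (m < n)%nat -> in_poly n v q ->
  on_line n v m p -> cross (edge_dir n v m) (psub q p) <= 0.
Proof.
  intros Hm Hq Hon. specialize (Hq m Hm). unfold on_line in Hon.
  replace (cross (edge_dir n v m) (psub q p)) with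
    (cross (edge_dir n v m) (psub q (v m)) - cross (edge_dir n v m) (psub p (v m)))
    by (unfold cross, psub; simpl; ring).
  lra.
Qed.

Lemma prec_cross_lt0 n v i j : convex_cw_polygon n v -> no_parallel_edges n v ->
  (i < n)%nat -> (j < n)%nat -> prec n v i j -> cross (edge_dir n v i) (edge_dir n v j) < 0.
Proof.
  intros Hcv Hnp Hi Hj [Hij [t [Ht Hon]]].
  pose proof (vertex_in_poly n v i Hcv Hi j Hj) as Hvi.
  pose proof (Hnp i j Hi Hj Hij) as Hnz.
  unfold on_line in Hon.
  replace (cross (edge_dir n v j) (psub (padd (v i) (pscale t (edge_dir n v i))) (v j))) with
    (cross (edge_dir n v j) (psub (v i) (v j)) - t * cross (edge_dir n v i) (edge_dir n v j))
    in Hon by (unfold cross, psub, padd, pscale; simpl; ring).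
  destruct (Rtotal_order (cross (edge_dir n v i) (edge_dir n v j)) 0) as [?|[?|?]];
    [assumption|contradiction|nra].
Qed.

Lemma parallelogram_sides (A : nat -> point) : is_parallelogram A ->
  psub (A 2%nat) (A 1%nat) = psub (A 3%nat) (A 0%nat) /\
  psub (A 2%nat) (A 3%nat) = psub (A 1%nat) (A 0%nat).
Proof.
  unfold is_parallelogram, padd, psub. intros Hpar.
  pose proof (f_equal fst Hpar) as Hx. pose proof (f_equal snd Hpar) as Hy. simpl in Hx, Hy.
  split; f_equal; lra.
Qed.

Lemma para_clockwise_cross_lt0 (A : nat -> point) : is_parallelogram A -> para_clockwise A ->
  cross (psub (A 1%nat) (A 0%nat)) (psub (A 3%nat) (A 0%nat)) < 0.
Proof.
  intros Hpar Hcw. unfold para_clockwise in Hcw.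
  rewrite (proj1 (parallelogram_sides A Hpar)) in Hcw. exact Hcw.
Qed.

Definition near0 (P : R -> Prop) : Prop :=
  exists d, 0 < d /\ forall e, Rabs e < d -> P e.

Lemma near0_impl (P Q : R -> Prop) : (forall e, P e -> Q e) -> near0 P -> near0 Q.
Proof. intros HPQ [d [Hd HP]]. exists d. split; auto. Qed.

Lemma near0_and (P Q : R -> Prop) : near0 P -> near0 Q -> near0 (fun e => P e /\ Q e).
Proof.
  intros [d1 [Hd1 HP]] [d2 [Hd2 HQ]]. exists (Rmin d1 d2). split; [apply Rmin_pos; assumption|].
  intros e He. split; [apply HP | apply HQ];
    eapply Rlt_le_trans; eauto using Rmin_l, Rmin_r.
Qed.

Lemma near0_forall_lt (N : nat) (P : nat -> R -> Prop) :
  (forall m, (m < N)%nat -> near0 (P m)) ->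
  near0 (fun e => forall m, (m < N)%nat -> P m e).
Proof.
  induction N as [|N IH]; intros HP.
  - exists 1. split; [lra|]. intros e _ m Hm. lia.
  - apply (near0_impl (fun e => (forall m, (m < N)%nat -> P m e) /\ P N e)).
    + intros e [Hlt HN] m Hm. destruct (Nat.eq_dec m N) as [->|Hne]; [exact HN|].
      apply Hlt. lia.
    + apply near0_and; [apply IH; auto | apply HP; lia].
Qed.

Lemma near0_abs_mult_lt a x : 0 < a -> near0 (fun e => Rabs (e * x) < a).
Proof.
  intros Ha. pose proof (Rabs_pos x) as Hx.
  exists (a / (1 + Rabs x)). split; [apply Rdiv_lt_0_compat; lra|].
  intros e He. rewrite Rabs_mult.
  apply Rle_lt_trans with (Rabs e * (1 + Rabs x)); [pose proof (Rabs_pos e); nra|].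
  apply (Rmult_lt_compat_r (1 + Rabs x)) in He; [|lra].
  replace (a / (1 + Rabs x) * (1 + Rabs x)) with a in He by (field; lra). exact He.
Qed.

Lemma near0_scale (P : R -> Prop) lam : near0 P -> near0 (fun e => P (e * lam)).
Proof.
  intros [d [Hd HP]]. apply (near0_impl (fun e => Rabs (e * lam) < d)); auto.
  apply near0_abs_mult_lt; exact Hd.
Qed.

Lemma near0_nonzero_pair (P : R -> Prop) : near0 P -> exists e, e <> 0 /\ P e /\ P (- e).
Proof.
  intros [d [Hd HP]]. exists (d / 2).
  assert (Habs : Rabs (d / 2) < d) by (rewrite Rabs_right; lra).
  split; [lra|]. split; apply HP; [|rewrite Rabs_Ropp]; exact Habs.
Qed.

Definition free_direction n v (p w : point) : Prop :=
  near0 (fun e => in_poly n v (padd p (pscale e w))).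

Lemma free_direction_scale n v p w lam :
  free_direction n v p w -> free_direction n v p (pscale lam w).
Proof.
  intros Hw. apply (near0_scale _ lam) in Hw. revert Hw. apply near0_impl.
  intros e. replace (pscale (e * lam) w) with (pscale e (pscale lam w)); [auto|].
  unfold pscale. simpl. f_equal; ring.
Qed.

Lemma free_direction_interior n v p w :
  (forall m, (m < n)%nat -> cross (edge_dir n v m) (psub p (v m)) < 0) ->
  free_direction n v p w.
Proof.
  intros Hint. apply (near0_impl (fun e => forall m, (m < n)%nat ->
    Rabs (e * cross (edge_dir n v m) w) < - cross (edge_dir n v m) (psub p (v m)))).
  - intros e He m Hm. specialize (He m Hm).
    replace (cross (edge_dir n v m) (psub (padd p (pscale e w)) (v m))) with
      (cross (edge_dir n v m) (psub p (v m)) + e * cross (edge_dir n v m) w)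
      by (unfold cross, psub, padd, pscale; simpl; ring).
    pose proof (Rle_abs (e * cross (edge_dir n v m) w)). lra.
  - apply near0_forall_lt. intros m Hm. apply near0_abs_mult_lt.
    specialize (Hint m Hm). lra.
Qed.

Lemma free_direction_open_edge n v k p : convex_cw_polygon n v -> (k < n)%nat ->
  in_open_edge n v k p -> free_direction n v p (edge_dir n v k).
Proof.
  intros Hcv Hk [tau [Htau ->]].
  apply (near0_impl (fun e => Rabs (e * 1) < Rmin tau (1 - tau))).
  - intros e He. rewrite Rmult_1_r in He.
    replace (padd (padd (v k) (pscale tau (edge_dir n v k))) (pscale e (edge_dir n v k)))
      with (padd (v k) (pscale (tau + e) (edge_dir n v k)))
      by (unfold padd, pscale; simpl; f_equal; ring).
    apply edge_point_in_poly; auto.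
    pose proof (Rmin_l tau (1 - tau)). pose proof (Rmin_r tau (1 - tau)).
    pose proof (Rle_abs e). pose proof (Rle_abs (- e)). rewrite Rabs_Ropp in *. lra.
  - apply near0_abs_mult_lt, Rmin_pos; lra.
Qed.

Lemma dist_padd_pscale p q e :
  Defs.dist p (padd p (pscale e q)) = Rabs e * sqrt (fst q ^ 2 + snd q ^ 2).
Proof.
  unfold Defs.dist, padd, pscale. cbn [fst snd].
  replace ((fst p - (fst p + e * fst q)) ^ 2 + (snd p - (snd p + e * snd q)) ^ 2) with
    (Rsqr e * (fst q ^ 2 + snd q ^ 2)) by (unfold Rsqr; ring).
  rewrite sqrt_mult_alt, sqrt_Rsqr_abs; [reflexivity|apply Rle_0_sqr].
Qed.

Lemma near0_dist_lt p q delta : 0 < delta ->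
  near0 (fun e => Defs.dist p (padd p (pscale e q)) < delta).
Proof.
  intros Hd. apply (near0_impl (fun e => Rabs (e * sqrt (fst q ^ 2 + snd q ^ 2)) < delta)).
  - intros e He. rewrite dist_padd_pscale.
    rewrite Rabs_mult, (Rabs_right (sqrt _)) in He; [exact He|apply Rle_ge, sqrt_pos].
  - apply near0_abs_mult_lt; exact Hd.
Qed.

Definition corner_move (A : nat -> point) (u w : point) (e : R) : nat -> point :=
  fun k => match k with
  | 0%nat => padd (A 0%nat) (pscale e (padd u w))
  | 1%nat => padd (A 1%nat) (pscale e u)
  | 3%nat => padd (A 3%nat) (pscale e w)
  | _ => A k
  end.

Lemma corner_move_parallelogram A u w e :
  is_parallelogram A -> is_parallelogram (corner_move A u w e).
Proof.
  unfold is_parallelogram, corner_move, padd, pscale. intros Hpar.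
  pose proof (f_equal fst Hpar) as Hx. pose proof (f_equal snd Hpar) as Hy. simpl in *.
  f_equal; lra.
Qed.

Lemma near0_corner_move_in_poly n v A u w : para_in_poly n v A ->
  free_direction n v (A 0%nat) (padd u w) -> free_direction n v (A 1%nat) u ->
  free_direction n v (A 3%nat) w ->
  near0 (fun e => para_in_poly n v (corner_move A u w e)).
Proof.
  intros [Hpar Hin] H0 H1 H3.
  apply (near0_impl (fun e => forall k, (k < 4)%nat -> in_poly n v (corner_move A u w e k))).
  - intros e He. split; [apply corner_move_parallelogram, Hpar | exact He].
  - apply near0_forall_lt. intros k Hk. destruct k as [|[|[|[|k]]]]; try assumption.
    + exists 1. split; [lra|]. intros e _. apply Hin. lia.
    + lia.
Qed.

Lemma near0_corner_move_dist (A : nat -> point) u w delta : 0 < delta ->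
  near0 (fun e => forall k, (k < 4)%nat -> Defs.dist (A k) (corner_move A u w e k) < delta).
Proof.
  intros Hd. apply near0_forall_lt. intros k Hk.
  destruct k as [|[|[|[|k]]]]; try (apply near0_dist_lt; exact Hd).
  - exists 1. split; [lra|]. intros e _. simpl. unfold Defs.dist.
    replace ((fst (A 2%nat) - fst (A 2%nat)) ^ 2 + (snd (A 2%nat) - snd (A 2%nat)) ^ 2)
      with 0 by ring.
    rewrite sqrt_0. exact Hd.
  - lia.
Qed.

Lemma corner_move_area_gain A u w e :
  cross (psub (A 1%nat) (A 0%nat)) (psub (A 3%nat) (A 0%nat)) < 0 -> cross w u < 0 -> e <> 0 ->
  para_area A < para_area (corner_move A u w e) \/
  para_area A < para_area (corner_move A u w (- e)).
Proof.
  intros HS Hwu He. unfold para_area. simpl.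
  set (S := cross (psub (A 1%nat) (A 0%nat)) (psub (A 3%nat) (A 0%nat))) in *.
  set (L := cross (psub (A 1%nat) (A 0%nat)) u + cross w (psub (A 3%nat) (A 0%nat))).
  assert (Hmove : forall x,
    cross (psub (padd (A 1%nat) (pscale x u)) (padd (A 0%nat) (pscale x (padd u w))))
          (psub (padd (A 3%nat) (pscale x w)) (padd (A 0%nat) (pscale x (padd u w))))
    = S - x * L + x ^ 2 * cross w u).
  { intros x. unfold S, L, cross, psub, padd, pscale. simpl. ring. }
  rewrite !Hmove, (Rabs_left S) by exact HS.
  pose proof (Rle_abs (- (S - e * L + e ^ 2 * cross w u))).
  pose proof (Rle_abs (- (S - - e * L + (- e) ^ 2 * cross w u))).
  rewrite !Rabs_Ropp in *.
  assert (0 < e ^ 2) by (rewrite <- Rsqr_pow2; apply Rsqr_pos_lt, He).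
  assert (e ^ 2 * cross w u < 0) by nra.
  assert ((- e) ^ 2 = e ^ 2) by ring.
  destruct (Rle_dec 0 (e * L)); [left|right]; nra.
Qed.

Lemma locally_maximal_corner_stuck n v A u w : locally_maximal n v A ->
  cross (psub (A 1%nat) (A 0%nat)) (psub (A 3%nat) (A 0%nat)) < 0 -> cross w u < 0 ->
  free_direction n v (A 0%nat) (padd u w) -> free_direction n v (A 1%nat) u ->
  free_direction n v (A 3%nat) w -> False.
Proof.
  intros [HA [delta [Hdelta Hmax]]] HS Hwu H0 H1 H3.
  destruct (near0_nonzero_pair _ (near0_and _ _
              (near0_corner_move_in_poly n v A u w HA H0 H1 H3)
              (near0_corner_move_dist A u w delta Hdelta)))
    as [e [He [[Hin Hnear] [Hin' Hnear']]]].
  destruct (corner_move_area_gain A u w e HS Hwu He) as [Hgain|Hgain].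
  - pose proof (Hmax _ Hin Hnear). lra.
  - pose proof (Hmax _ Hin' Hnear'). lra.
Qed.

Lemma corner_cross_sign (di dj dk a b : point) :
  cross di dj < 0 -> cross a b < 0 ->
  cross dk di <> 0 -> cross dj dk <> 0 ->
  cross di a <= 0 -> 0 <= cross di b -> 0 <= cross dj a -> cross dj b <= 0 ->
  cross dk a <= 0 -> cross dk b <= 0 ->
  0 < cross dk di * cross dj dk.
Proof.
  assert (Ea : cross di dj * cross dk a = - cross dk di * cross dj a - cross dj dk * cross di a)
    by (unfold cross; ring).
  assert (Eb : cross di dj * cross dk b = - cross dk di * cross dj b - cross dj dk * cross di b)
    by (unfold cross; ring).
  assert (ES : cross di dj * cross a b = cross di a * cross dj b - cross di b * cross dj a)
    by (unfold cross; ring).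
  revert Ea Eb ES.
  generalize (cross dk di) (cross dj dk) (cross di dj) (cross a b) (cross di a) (cross di b)
    (cross dj a) (cross dj b) (cross dk a) (cross dk b).
  intros p q c S Xa Xb Ya Yb Ka Kb Ea Eb ES Hc HS Hp Hq HXa HXb HYa HYb HKa HKb.
  assert (HcS : 0 < c * S) by nra.
  (* If p and q had opposite signs, Ea or Eb would make a or b parallel to
     both d_i and d_j, contradicting [c * S > 0] through ES. *)
  destruct (Rtotal_order p 0) as [Hp'|[Hp'|Hp']]; [|contradiction|];
  destruct (Rtotal_order q 0) as [Hq'|[Hq'|Hq']]; try contradiction; try nra.
  - assert (Yb = 0) by nra. assert (Xb = 0) by nra. subst. nra.
  - assert (Ya = 0) by nra. assert (Xa = 0) by nra. subst. nra.
Qed.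

Lemma corner_on_edge_cross_pos n v A i j k :
  para_in_poly n v A -> (i < n)%nat -> (j < n)%nat -> (k < n)%nat ->
  on_line n v i (A 3%nat) -> on_line n v j (A 1%nat) -> on_line n v k (A 0%nat) ->
  cross (edge_dir n v i) (edge_dir n v j) < 0 ->
  cross (psub (A 1%nat) (A 0%nat)) (psub (A 3%nat) (A 0%nat)) < 0 ->
  cross (edge_dir n v k) (edge_dir n v i) <> 0 -> cross (edge_dir n v j) (edge_dir n v k) <> 0 ->
  0 < cross (edge_dir n v k) (edge_dir n v i) * cross (edge_dir n v j) (edge_dir n v k).
Proof.
  intros [Hpar Hin] Hi Hj Hk Hon3 Hon1 Hon0 Hc HS Hp Hq.
  destruct (parallelogram_sides A Hpar) as [E21 E23].
  assert (Hneg : forall m a b, (m < n)%nat -> (a < 4)%nat -> on_line n v m (A b) ->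
            cross (edge_dir n v m) (psub (A a) (A b)) <= 0)
    by (intros; apply in_poly_cross_le0_of_on_line; auto).
  assert (Hpos : forall m a b, (m < n)%nat -> (a < 4)%nat -> on_line n v m (A b) ->
            0 <= cross (edge_dir n v m) (psub (A b) (A a))).
  { intros m a b Hm Ha Hon. pose proof (Hneg m a b Hm Ha Hon).
    replace (cross (edge_dir n v m) (psub (A b) (A a))) with
      (- cross (edge_dir n v m) (psub (A a) (A b))) by (unfold cross, psub; cbn [fst snd]; ring).
    lra. }
  apply corner_cross_sign with (a := psub (A 1%nat) (A 0%nat)) (b := psub (A 3%nat) (A 0%nat));
    auto.
  - rewrite <- E23. apply Hneg; auto.
  - apply Hpos; auto.
  - apply Hpos; auto.
  - rewrite <- E21. apply Hneg; auto.
Qed.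

Lemma not_slidable_distinct_edges n v A a b k m : ~ slidable n v A ->
  (a < 4)%nat -> (b < 4)%nat -> a <> b -> (k < n)%nat ->
  in_open_edge n v k (A a) -> in_open_edge n v m (A b) -> k <> m.
Proof.
  intros Hns Ha Hb Hab Hk Hka Hmb ->. apply Hns. exists m, a, b. repeat split; assumption.
Qed.

Lemma cross_pscale (a b : R) (x y : point) :
  cross (pscale a x) (pscale b y) = a * b * cross x y.
Proof. unfold cross, pscale. simpl. ring. Qed.

Lemma cross_relation (di dj dk : point) :
  padd (pscale (cross dk di) dj) (pscale (cross dj dk) di) = pscale (- cross di dj) dk.
Proof. unfold padd, pscale, cross. simpl. f_equal; ring. Qed.

Theorem lemma10 (n : nat) (v : nat -> point) (A : nat -> point) (i j : nat) :
  convex_cw_polygon n v ->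
  no_parallel_edges n v ->
  LMAP n v A ->
  para_clockwise A ->
  (i < n)%nat -> (j < n)%nat ->
  in_open_edge n v i (A 3%nat) ->
  in_open_edge n v j (A 1%nat) ->
  prec n v i j ->
  exists k, (k < n)%nat /\ A 0%nat = v k.
Proof.
  intros Hcv Hnp [Hlm Hns] Hcw Hi Hj HA3 HA1 Hprec.
  pose proof (proj1 Hlm) as HA. pose proof HA as [Hpar Hin].
  pose proof (prec_cross_lt0 n v i j Hcv Hnp Hi Hj Hprec) as Hc.
  pose proof (para_clockwise_cross_lt0 A Hpar Hcw) as HS.
  pose proof (free_direction_open_edge n v j _ Hcv Hj HA1) as H1.
  pose proof (free_direction_open_edge n v i _ Hcv Hi HA3) as H3.
  destruct (in_poly_interior_or_on_line n v (A 0%nat) (Hin 0%nat ltac:(lia)))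
    as [Hint|[k [Hk Hon]]].
  - exfalso. apply (locally_maximal_corner_stuck n v A (edge_dir n v j) (edge_dir n v i));
      auto using free_direction_interior.
  - destruct (on_line_vertex_or_open_edge n v k (A 0%nat) Hcv Hk (Hin 0%nat ltac:(lia)) Hon)
      as [Hvertex|HA0]; [exact Hvertex|exfalso].
    assert (Hki : k <> i) by (apply (not_slidable_distinct_edges n v A 0 3 k i); auto).
    assert (Hkj : k <> j) by (apply (not_slidable_distinct_edges n v A 0 1 k j); auto).
    set (p := cross (edge_dir n v k) (edge_dir n v i)).
    set (q := cross (edge_dir n v j) (edge_dir n v k)).
    assert (Hpq : 0 < p * q).
    { apply corner_on_edge_cross_pos with (A := A); auto using in_open_edge_on_line. }
    apply (locally_maximal_corner_stuck n v A (pscale p (edge_dir n v j))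
             (pscale q (edge_dir n v i))); auto using free_direction_scale.
    + rewrite cross_pscale. nra.
    + unfold p, q. rewrite cross_relation.
      apply free_direction_scale, (free_direction_open_edge n v k); auto.
Qed.
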